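(* Let $p$ be a prime, let $A$ be an integral domain with $\mathbb{Q}\subseteq A$ and let $F=\mathrm{Quot}\,A$. Then there is a one-to-one correspondence between valuation rings $B\subseteq F$ of $p$-valuations of $F$ and total $p$-divisibilities $|$ on $A$ that have cancellation and support $I(|)=\{0\}$, given by $B\mapsto |$ with $a|b\Leftrightarrow (a=b=0)$ or ($a\ne0$ and $b/a\in B$), and conversely $|\mapsto B=\{b/a;\ a,b\in A,\ a\ne0,\ a|b\}\cup\{0\}$.
   Context: A valuation $v:F\twoheadrightarrow\Gamma\cup\{\infty\}$ on a field of characteristic $0$ is a $p$-valuation if $\Gamma$ is a discretely ordered abelian group with $v(p)$ as minimal positive element and residue field $\mathbb{F}_p$. A divisibility on $A$ is a binary relation $|\subseteq A\times A$ such that for all $a,b,c$: (1) $a|a$; (2) $a|b,\ b|c\Rightarrow a|c$; (3) $a|b,\ a|c\Rightarrow a|b-c$; (4) $a|b\Rightarrow ac|bc$; (5) $0\nmid1$. A $p$-divisibility additionally satisfies for all $a,b$: (6) $0\nmid a\Rightarrow pa\nmid a$; (7) $p[(a^pb-b^pa)^2-(b^{p+1})^2]\ \big|\ (a^pb-b^pa)b^{p+1}$. Support $I(|)=\{a;\ 0|a\}$; total: $a|b$ or $b|a$ for all $a,b$; cancellation: $0\nmid c$ and $ac|bc$ imply $a|b$. *)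

From HB Require Import structures.
From mathcomp Require Import all_boot all_order all_algebra.
From mathcomp Require Import fraction.
Set Implicit Arguments. Unset Strict Implicit. Unset Printing Implicit Defensive.
Import GRing.Theory.
Local Open Scope ring_scope.

(* ---------- Value groups: Gamma \cup {oo} is modelled as option Gamma,
   with None = oo. Gamma is an abelian group (zmodType) with an explicit
   order relation [le]. ---------- *)

Section Valuations.
Variables (G : zmodType) (le : G -> G -> Prop).

Definition ordered_abelian_group : Prop :=
  [/\ (forall a, le a a),
      (forall a b, le a b -> le b a -> a = b),
      (forall a b c, le a b -> le b c -> le a c),
      (forall a b, le a b \/ le b a)
    & (forall a b c, le a b -> le (a + c) (b + c))].

Definition glt (a b : G) : Prop := le a b /\ a <> b.

Definition vle (x y : option G) : Prop :=
  match x, y with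
  | _, None => True
  | None, Some _ => False
  | Some a, Some b => le a b
  end.

Definition vlt (x y : option G) : Prop := vle x y /\ x <> y.

Definition vadd (x y : option G) : option G :=
  match x, y with
  | Some a, Some b => Some (a + b)
  | _, _ => None
  end.

Variable (F : fieldType).

Definition is_valuation (v : F -> option G) : Prop :=
  [/\ ordered_abelian_group,
      (forall x, v x = None <-> x = 0),
      (forall x y, v (x * y) = vadd (v x) (v y)),
      (forall x y, vle (v x) (v (x + y)) \/ vle (v y) (v (x + y)))
    & (forall g, exists x, v x = Some g)].

Definition val_ring (v : F -> option G) (x : F) : Prop := vle (Some 0) (v x).

(* v is a p-valuation: Gamma discretely ordered with v(p) as minimal positive
   element, and residue field F_p (i.e. every element of the valuation ring
   is congruent to an integer modulo the maximal ideal; since v(p) > 0 the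
   residue field has characteristic p, so this says exactly that the residue
   field is its prime field F_p). *)
Definition is_p_valuation (p : nat) (v : F -> option G) : Prop :=
  [/\ is_valuation v,
      (exists2 g0, v (p%:R) = Some g0 &
         glt 0 g0 /\ forall g, glt 0 g -> le g0 g)
    & (forall x, val_ring v x -> exists n : int, vlt (Some 0) (v (x - n%:~R)))].

End Valuations.

Definition is_p_val_ring (p : nat) (F : fieldType) (B : F -> Prop) : Prop :=
  exists (G : zmodType) (le : G -> G -> Prop) (v : F -> option G),
    is_p_valuation le p v /\ forall x, B x <-> val_ring le v x.

Section Divisibility.
Variables (A : comRingType) (dv : A -> A -> Prop).

Definition is_divisibility : Prop :=
  [/\ (forall a, dv a a),
      (forall a b c, dv a b -> dv b c -> dv a c),
      (forall a b c, dv a b -> dv a c -> dv a (b - c)),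
      (forall a b c, dv a b -> dv (a * c) (b * c))
    & ~ dv 0 1].

Definition is_p_divisibility (p : nat) : Prop :=
  [/\ is_divisibility,
      (forall a, ~ dv 0 a -> ~ dv (p%:R * a) a)
    & (forall a b,
        dv (p%:R * ((a ^+ p * b - b ^+ p * a) ^+ 2 - (b ^+ p.+1) ^+ 2))
           ((a ^+ p * b - b ^+ p * a) * b ^+ p.+1))].

(* support I(|) = {a ; 0 | a} *)
Definition support_is_zero : Prop := forall a, dv 0 a <-> a = 0.

Definition div_total : Prop := forall a b, dv a b \/ dv b a.

Definition div_cancellation : Prop :=
  forall a b c, ~ dv 0 c -> dv (a * c) (b * c) -> dv a b.

End Divisibility.

Definition good_p_div (p : nat) (A : comRingType) (dv : A -> A -> Prop) : Prop :=
  [/\ is_p_divisibility dv p, div_total dv, div_cancellation dv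
    & support_is_zero dv].

Section Maps.
Variable A : idomainType.
Local Notation F := {fraction A}.
Local Notation "x %:F" := (@FracField.tofrac A x).

Definition div_of_ring (B : F -> Prop) (a b : A) : Prop :=
  (a = 0 /\ b = 0) \/ (a <> 0 /\ B (b%:F / a%:F)).

Definition ring_of_div (dv : A -> A -> Prop) (x : F) : Prop :=
  (exists a b : A, [/\ a <> 0, dv a b & x = b%:F / a%:F]) \/ x = 0.

End Maps.

From HB Require Import structures.
From mathcomp Require Import all_boot all_order all_algebra all_field.
From mathcomp Require Import fraction ring zify.
From Stdlib Require Import Classical ClassicalEpsilon.
From Stdlib Require Import FunctionalExtensionality PropExtensionality.
Set Implicit Arguments. Unset Strict Implicit. Unset Printing Implicit Defensive.
Import GRing.Theory.
Local Open Scope ring_scope.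

(* A subring B of F is the valuation ring of a p-valuation iff it is a
   valuation ring containing p but not 1/p whose maximal ideal is pB and
   whose elements are all congruent to integers modulo pB.  Kochen's
   criterion reformulates this: writing y = x^p - x, one has y^2 <> 1 and
   y / (p (y^2 - 1)) in B for every x in F.  For x in B, y lies in pB by
   Fermat's little theorem and 1 - y^2 is a unit; for x outside B the
   quotient is (1/x)^p / p times a unit.  Conversely the criterion gives
   (x^p - x)/p in B for x in B, which together with
   x^p - x = prod_(i < p) (x - i) mod pB puts some x - i into the maximal
   ideal.  Writing x = a/b and clearing the denominator b^(2(p+1)), the
   criterion becomes axiom (7) for the relation a | b <=> b/a in B, while
   the remaining axioms say exactly that B is a valuation ring containing p
   but not 1/p.  A valuation ring B gives back a valuation, with value group
   F^x / B^x ordered by divisibility. *)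

Local Notation "x %:F" := (@FracField.tofrac _ x).

Lemma fraction_repr (A : idomainType) (x : {fraction A}) :
  exists a b : A, b != 0 /\ x = a%:F / b%:F.
Proof.
elim/quotW: x => r.
exists (\n_r), (\d_r); split; first exact: denom_ratioP.
have nz_d : (\d_r)%:F != 0 by rewrite tofrac_eq0 denom_ratioP.
apply: (canRL (mulfK nz_d)).
rewrite !piE /FracField.mulf /=.
apply/eqmodP; rewrite /= FracField.equivfE /=.
by rewrite !numden_Ratio ?mulf_neq0 ?oner_eq0 ?denom_ratioP // !mulr1 mulrC.
Qed.

Lemma div_through (F : fieldType) (x y z : F) : y != 0 -> x / z = x / y * (y / z).
Proof. by move=> y_neq0; rewrite mulrA divfK. Qed.

Lemma tofrac_divMr (A : idomainType) (a b c : A) : a != 0 -> c != 0 ->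
  (b * c)%:F / (a * c)%:F = b%:F / a%:F.
Proof.
move=> a_neq0 c_neq0; rewrite !tofracM invfM mulrACA divff ?mulr1 //.
by rewrite tofrac_eq0.
Qed.

Lemma fermat_int (p : nat) (n : int) : prime p -> (p %| n ^+ p - n)%Z.
Proof.
move=> p_pr; rewrite (dvdz_pcharf (pchar_Fp p_pr)) rmorphB rmorphXn /=.
have frob (z : 'F_p) : z ^+ p = z by rewrite -[in X in _ ^+ X](card_Fp p_pr) expf_card.
by rewrite frob subrr.
Qed.

Lemma Fp_Xp_subX_prod (p : nat) : prime p ->
  ('X^p - 'X : {poly 'F_p}) = \prod_(i < p) ('X - (i%:R : 'F_p)%:P).
Proof.
move=> p_pr.
have -> : ('X^p - 'X : {poly 'F_p}) = 'X^#|'F_p| - 'X by rewrite card_Fp.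
rewrite finField_genPoly.
rewrite (reindex (fun i : 'I_p => (i : nat)%:R : 'F_p)) //.
exists (cast_ord (Fp_cast p_pr)) => [i _ | x _] /=; last exact: natr_Zp.
by apply: val_inj; rewrite /= val_Fp_nat // modn_small.
Qed.

Definition fermat_poly (p : nat) : {poly int} :=
  'X^p - 'X - \prod_(i < p) ('X - ((i : nat)%:R : int)%:P).

Lemma fermat_poly_coef_dvd p k : prime p -> (p %| (fermat_poly p)`_k)%Z.
Proof.
move=> p_pr.
have Fp_eq0 : map_poly ( *~%R (1 : 'F_p)) (fermat_poly p) = 0.
  rewrite /fermat_poly !rmorphB /= map_polyXn map_polyX rmorph_prod /=.
  under eq_bigr do rewrite map_polyXsubC /= rmorph_nat.
  by rewrite Fp_Xp_subX_prod // subrr.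
rewrite (dvdz_pcharf (pchar_Fp p_pr)).
have := congr1 (fun q : {poly 'F_p} => q`_k) Fp_eq0.
by rewrite coef_map /= coef0 => ->.
Qed.

Lemma fermat_poly_eval (F : fieldType) (p : nat) (x : F) : prime p ->
  exists q : {poly int},
    x ^+ p - x - \prod_(i < p) (x - (i : nat)%:R) =
    (map_poly ( *~%R (1 : F)) q).[x] * p%:R.
Proof.
move=> p_pr.
pose P := fermat_poly p.
pose Q : {poly int} := \poly_(k < size P) (P`_k %/ (p : int))%Z.
have PQ : P = Q * (p : int)%:P.
  apply/polyP => i; rewrite coefMC coef_poly.
  case: ltnP => hi; first by rewrite divzK // fermat_poly_coef_dvd.
  by rewrite mul0r nth_default.
exists Q.
have -> : x ^+ p - x - \prod_(i < p) (x - (i : nat)%:R) =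
          (map_poly ( *~%R (1 : F)) P).[x].
  rewrite /P /fermat_poly !rmorphB /= map_polyXn map_polyX rmorph_prod /=.
  rewrite !hornerE horner_prod; congr (_ - _).
  by apply: eq_bigr => i _; rewrite map_polyXsubC /= rmorph_nat !hornerE.
by rewrite PQ rmorphM /= map_polyC hornerM hornerC.
Qed.

(** * Valuation rings *)

Section ValuationRing.
Variables (F : fieldType) (B : F -> Prop).

Definition valuation_ring : Prop :=
  [/\ B 1, (forall x y, B x -> B y -> B (x - y)),
      (forall x y, B x -> B y -> B (x * y))
    & (forall x, x != 0 -> B x \/ B x^-1)].

Definition maxideal (z : F) : Prop := B z /\ (z = 0 \/ ~ B z^-1).

(* The fourth condition says that the maximal ideal is p B, the last one
   that the residue field is the prime field. *)
Definition p_valuation_ring (p : nat) : Prop :=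
  [/\ valuation_ring, B p%:R, ~ B (p%:R)^-1,
      (forall z, maxideal z -> B (z / p%:R))
    & (forall x, B x -> exists n : int, maxideal (x - n%:~R))].

Hypothesis hB : valuation_ring.

Lemma vr1 : B 1. Proof. by case: hB. Qed.
Lemma vrB x y : B x -> B y -> B (x - y). Proof. by case: hB => _ h *; apply: h. Qed.
Lemma vrM x y : B x -> B y -> B (x * y). Proof. by case: hB => _ _ h *; apply: h. Qed.
Lemma vr_or_inv x : x != 0 -> B x \/ B x^-1. Proof. by case: hB => _ _ _ h; apply: h. Qed.
Lemma vr0 : B 0. Proof. by rewrite -(subrr 1); apply: vrB; apply: vr1. Qed.
Lemma vrN x : B x -> B (- x). Proof. by move=> Bx; rewrite -sub0r; apply: vrB => //; apply: vr0. Qed.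

Lemma vrD x y : B x -> B y -> B (x + y).
Proof. by move=> Bx By; rewrite -[y]opprK; apply: vrB => //; apply: vrN. Qed.

Lemma vr_nat n : B n%:R.
Proof. by elim: n => [|n IH]; [exact: vr0 | rewrite mulrS; apply: vrD => //; apply: vr1]. Qed.

Lemma vr_int (n : int) : B n%:~R.
Proof. by case: n => n; rewrite ?NegzE ?mulrNz; [apply: vr_nat | apply: vrN; apply: vr_nat]. Qed.

Lemma vrX x k : B x -> B (x ^+ k).
Proof. by move=> Bx; elim: k => [|k IH]; [exact: vr1 | rewrite exprS; apply: vrM]. Qed.

Lemma vr_sum (I : Type) (r : seq I) (P : pred I) (f : I -> F) :
  (forall i, P i -> B (f i)) -> B (\sum_(i <- r | P i) f i).
Proof. by move=> Bf; apply: (big_ind B) => //; [exact: vr0 | exact: vrD]. Qed.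

Lemma maxideal0 : maxideal 0. Proof. by split; [exact: vr0 | left]. Qed.

Lemma vr_unitP u : B u -> ~ maxideal u -> u != 0 /\ B u^-1.
Proof.
move=> Bu not_max; have [u0|u_neq0] := eqVneq u 0.
  by case: not_max; rewrite u0; apply: maxideal0.
by split => //; apply: NNPP => Bu_inv; apply: not_max; split => //; right.
Qed.

Lemma maxideal1 : ~ maxideal 1.
Proof. by case=> _ [/eqP|]; rewrite ?oner_eq0 // invr1; apply; apply: vr1. Qed.

Lemma maxidealMl b z : B b -> maxideal z -> maxideal (b * z).
Proof.
move=> Bb [Bz [->|Bz_inv]]; first by rewrite mulr0; apply: maxideal0.
split; first exact: vrM.
have [->|b_neq0] := eqVneq b 0; first by left; rewrite mul0r.
have [->|z_neq0] := eqVneq z 0; first by left; rewrite mulr0.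
right=> Bbz_inv; apply: Bz_inv.
have -> : z^-1 = b * (b * z)^-1 by rewrite invfM mulrA divff // mul1r.
exact: vrM.
Qed.

Lemma maxidealN z : maxideal z -> maxideal (- z).
Proof. by move=> mz; rewrite -mulN1r; apply: maxidealMl => //; apply: vrN; apply: vr1. Qed.

(* Order the summands so that the quotient of the first by the second lies in
   B; the sum is then a B-multiple of the second. *)
Lemma maxidealD z1 z2 : maxideal z1 -> maxideal z2 -> maxideal (z1 + z2).
Proof.
have key a b : b != 0 -> maxideal b -> B (a / b) -> maxideal (a + b).
  move=> b_neq0 mb Bab; have -> : a + b = (a / b + 1) * b by rewrite mulrDl divfK // mul1r.
  by apply: maxidealMl => //; apply: vrD => //; exact: vr1.
move=> m1 m2; have [->|z1_neq0] := eqVneq z1 0; first by rewrite add0r.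
have [->|z2_neq0] := eqVneq z2 0; first by rewrite addr0.
have [|B21] := vr_or_inv (mulf_neq0 z1_neq0 (invr_neq0 z2_neq0)); first exact: key.
by rewrite addrC; apply: key; rewrite // -[z2 / z1]invf_div.
Qed.

Lemma maxidealB z1 z2 : maxideal z1 -> maxideal z2 -> maxideal (z1 - z2).
Proof. by move=> m1 m2; apply: maxidealD => //; apply: maxidealN. Qed.

Lemma vr_unit1B z : maxideal z -> B (1 - z) /\ ~ maxideal (1 - z).
Proof.
move=> [Bz mz]; split; first by apply: vrB => //; apply: vr1.
move=> m1z; apply: maxideal1; rewrite -(subrK z 1).
exact: maxidealD.
Qed.

Lemma maxideal_prod (I : Type) (r : seq I) (f : I -> F) :
  (forall i, B (f i)) -> maxideal (\prod_(i <- r) f i) -> exists i, maxideal (f i).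
Proof.
move=> Bf; elim: r => [|i r IH]; first by rewrite big_nil => /maxideal1.
rewrite big_cons => m_prod.
have [mi|not_mi] := classic (maxideal (f i)); first by exists i.
apply: IH; have [fi_neq0 Bfi_inv] := vr_unitP (Bf i) not_mi.
rewrite -[\prod_(j <- r) f j](mulKf fi_neq0).
exact: maxidealMl.
Qed.

End ValuationRing.

(** * The valuation of a valuation ring *)

Definition asbool (P : Prop) : bool :=
  if excluded_middle_informative P then true else false.

Lemma asboolP P : reflect P (asbool P).
Proof. by rewrite /asbool; case: excluded_middle_informative => h; constructor. Qed.

Section ValueGroup.
Variables (F : fieldType) (B : F -> Prop).
Hypothesis hB : valuation_ring B.

Definition associated (x y : F) : Prop := B (x / y) /\ B (y / x).

Lemma associated_refl x : x != 0 -> associated x x.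
Proof. by move=> x_neq0; rewrite /associated divff //; split; apply: (vr1 hB). Qed.

Lemma associated_sym x y : associated x y -> associated y x.
Proof. by case. Qed.

Lemma associated_trans x y z : y != 0 ->
  associated x y -> associated y z -> associated x z.
Proof.
move=> y_neq0 [Bxy Byx] [Byz Bzy]; split.
  by rewrite (div_through _ _ y_neq0); apply: (vrM hB).
by rewrite (div_through _ _ y_neq0); apply: (vrM hB).
Qed.

Lemma associatedMr a a' b : b != 0 -> associated a a' -> associated (a * b) (a' * b).
Proof. by move=> b_neq0 [h1 h2]; split; rewrite invfM mulrACA divff // mulr1. Qed.

(* [class_rep] picks a representative of the class of x modulo units of B;
   0 is sent to the class of 1 so that representatives are never zero. *)
Definition nz1 (x : F) : F := if x == 0 then 1 else x.

Lemma nz1_neq0 x : nz1 x != 0.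
Proof. by rewrite /nz1; case: ifPn => // _; apply: oner_neq0. Qed.

Lemma nz1E x : x != 0 -> nz1 x = x.
Proof. by rewrite /nz1 => /negbTE ->. Qed.

Definition assoc_class (x : F) : pred F := fun y => asbool (y != 0 /\ associated x y).

Definition class_rep (x : F) : F := choose (assoc_class (nz1 x)) (nz1 x).

Lemma assoc_class_nz1 x : assoc_class (nz1 x) (nz1 x).
Proof. by apply/asboolP; split; [|apply: associated_refl]; apply: nz1_neq0. Qed.

Lemma class_repP x : class_rep x != 0 /\ associated (nz1 x) (class_rep x).
Proof. by have /asboolP := chooseP (assoc_class_nz1 x). Qed.

Lemma class_rep_eq x y : associated (nz1 x) (nz1 y) -> class_rep x = class_rep y.
Proof.
move=> xy.
have E : assoc_class (nz1 x) =1 assoc_class (nz1 y).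
  move=> z; apply/asboolP/asboolP => -[z_neq0 h]; split => //.
    exact: associated_trans (nz1_neq0 x) (associated_sym xy) h.
  exact: associated_trans (nz1_neq0 y) xy h.
rewrite /class_rep (eq_choose E); apply: choose_id; last exact: assoc_class_nz1.
by rewrite -E; apply: assoc_class_nz1.
Qed.

Lemma class_rep_inj x y : class_rep x = class_rep y -> associated (nz1 x) (nz1 y).
Proof.
move=> e; have [_ h1] := class_repP x; have [n2 h2] := class_repP y.
by rewrite -e in n2 h2; exact: associated_trans n2 h1 (associated_sym h2).
Qed.

Definition value_group := {x : F | asbool (x != 0 /\ class_rep x = x)}.

Lemma value_subproof x : asbool (class_rep x != 0 /\ class_rep (class_rep x) = class_rep x).
Proof.
have [n h] := class_repP x; apply/asboolP; split => //.
by apply: class_rep_eq; rewrite (nz1E n); apply: associated_sym.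
Qed.

Definition value (x : F) : value_group := exist _ (class_rep x) (value_subproof x).

Lemma value_group_neq0 (g : value_group) : val g != 0.
Proof. by case: g => x /= /asboolP []. Qed.

Lemma valK (g : value_group) : value (val g) = g.
Proof. by apply: val_inj => /=; case: g => x /= /asboolP []. Qed.

Lemma value_eq x y : x != 0 -> y != 0 -> associated x y -> value x = value y.
Proof. by move=> ? ? xy; apply: val_inj; apply: class_rep_eq; rewrite !nz1E. Qed.

Lemma value_inj x y : x != 0 -> y != 0 -> value x = value y -> associated x y.
Proof. by move=> ? ? /(congr1 val) /class_rep_inj; rewrite !nz1E. Qed.

Lemma associated_value x : x != 0 -> associated x (val (value x)).
Proof. by move=> x_neq0; have [_] := class_repP x; rewrite nz1E. Qed.

Lemma value_Ml x y : x != 0 -> y != 0 -> value (val (value x) * y) = value (x * y).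
Proof.
move=> x_neq0 y_neq0; apply: value_eq; rewrite ?mulf_neq0 ?value_group_neq0 //.
exact/associatedMr/associated_sym/associated_value.
Qed.

Definition value_add (g h : value_group) : value_group := value (val g * val h).
Definition value_zero : value_group := value 1.
Definition value_opp (g : value_group) : value_group := value (val g)^-1.

Lemma value_addA : associative value_add.
Proof.
move=> g h k; rewrite /value_add value_Ml ?mulf_neq0 ?value_group_neq0 //.
rewrite [val g * val (value _)]mulrC value_Ml ?mulf_neq0 ?value_group_neq0 //.
by rewrite mulrC mulrA.
Qed.

Lemma value_addC : commutative value_add.
Proof. by move=> g h; rewrite /value_add mulrC. Qed.

Lemma value_add0 : left_id value_zero value_add.
Proof. by move=> g; rewrite /value_add value_Ml ?oner_neq0 ?value_group_neq0 // mul1r valK. Qed.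

Lemma value_addN : left_inverse value_zero value_opp value_add.
Proof.
move=> g; rewrite /value_add /value_opp value_Ml ?invr_eq0 ?value_group_neq0 //.
by rewrite mulVf ?value_group_neq0.
Qed.

HB.instance Definition _ := [Choice of value_group by <:].
HB.instance Definition _ :=
  GRing.isZmodule.Build value_group value_addA value_addC value_add0 value_addN.

Lemma value0 : (0 : value_group) = value 1. Proof. by []. Qed.
Lemma valueD (g h : value_group) : g + h = value (val g * val h). Proof. by []. Qed.

Definition value_le (g h : value_group) : Prop := B (val h / val g).

Definition ring_valuation (x : F) : option value_group :=
  if x == 0 then None else Some (value x).

Lemma ring_valuationE x : x != 0 -> ring_valuation x = Some (value x).
Proof. by rewrite /ring_valuation => /negbTE ->. Qed.

Lemma vr_div_associated a a' b b' : a != 0 -> b != 0 ->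
  associated a a' -> associated b b' -> B (b / a) -> B (b' / a').
Proof.
move=> a_neq0 b_neq0 [Baa' _] [_ Bb'b] Bba.
by rewrite (div_through b' a' a_neq0) (div_through b' a b_neq0); apply: (vrM hB) => //; apply: (vrM hB).
Qed.

Lemma value_leE x y : x != 0 -> y != 0 -> value_le (value x) (value y) <-> B (y / x).
Proof.
move=> x_neq0 y_neq0; rewrite /value_le; split.
  apply: vr_div_associated; rewrite ?value_group_neq0 //;
  exact/associated_sym/associated_value.
by apply: vr_div_associated => //; apply: associated_value.
Qed.

Lemma value_le_order : ordered_abelian_group value_le.
Proof.
have ng := value_group_neq0.
split.
- by move=> g; rewrite /value_le divff //; apply: (vr1 hB).
- move=> g h gh hg; rewrite -(valK g) -(valK h); exact: value_eq.
- move=> g h k gh hk; rewrite /value_le.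
  by rewrite (div_through _ _ (ng h)); apply: (vrM hB).
- move=> g h; have [gh|hg] := vr_or_inv hB (mulf_neq0 (ng h) (invr_neq0 (ng g))).
    by left.
  by right; rewrite /value_le -invf_div.
- move=> g h k gh; rewrite !valueD.
  apply/value_leE; rewrite ?mulf_neq0 //.
  by rewrite invfM mulrACA divff // mulr1.
Qed.

Lemma ring_valuation_is_valuation : is_valuation value_le ring_valuation.
Proof.
split.
- exact: value_le_order.
- by move=> x; rewrite /ring_valuation; case: eqP.
- move=> x y; have [->|x_neq0] := eqVneq x 0; first by rewrite mul0r /ring_valuation eqxx.
  have [->|y_neq0] := eqVneq y 0; first by rewrite mulr0 /ring_valuation eqxx; case: ifP.
  rewrite !ring_valuationE ?mulf_neq0 //=; congr Some.
  rewrite valueD value_Ml ?value_group_neq0 //.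
  apply: value_eq; rewrite ?mulf_neq0 ?value_group_neq0 // ![x * _]mulrC.
  exact/associatedMr/associated_value.
- move=> x y.
  have vle_refl o : vle value_le o o.
    by case: o => //= g; case: value_le_order => le_refl *; apply: le_refl.
  have [xy0|xy_neq0] := eqVneq (x + y) 0.
    by left; rewrite xy0 /ring_valuation eqxx; case: ifP.
  have [->|x_neq0] := eqVneq x 0; first by rewrite add0r; right.
  have [->|y_neq0] := eqVneq y 0; first by rewrite addr0; left.
  rewrite !ring_valuationE //=.
  have [Byx|Bxy] := vr_or_inv hB (mulf_neq0 y_neq0 (invr_neq0 x_neq0)).
    left; apply/value_leE => //; rewrite mulrDl divff //.
    by apply: (vrD hB) => //; apply: (vr1 hB).
  right; apply/value_leE => //; rewrite invf_div in Bxy; rewrite mulrDl divff //.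
  by apply: (vrD hB) => //; apply: (vr1 hB).
- by move=> g; exists (val g); rewrite ring_valuationE ?value_group_neq0 // valK.
Qed.

Lemma val_ring_valuation x : B x <-> val_ring value_le ring_valuation x.
Proof.
rewrite /val_ring; have [->|x_neq0] := eqVneq x 0.
  by rewrite /ring_valuation eqxx; split => // _; apply: (vr0 hB).
rewrite ring_valuationE //= value0 value_leE ?oner_neq0 //.
by rewrite divr1.
Qed.

Lemma p_valuation_ring_is_p_val_ring p : p_valuation_ring B p -> is_p_val_ring p B.
Proof.
case=> _ Bp not_Bp_inv p_max residue.
have p_neq0 : (p%:R : F) != 0.
  by apply/eqP => p0; apply: not_Bp_inv; rewrite p0 invr0; apply: (vr0 hB).
exists value_group, value_le, ring_valuation; split; last exact: val_ring_valuation.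
split.
- exact: ring_valuation_is_valuation.
- exists (value p%:R); first exact: ring_valuationE.
  split.
    split; first by rewrite value0; apply/value_leE; rewrite ?oner_neq0 // divr1.
    rewrite value0 => /value_inj; rewrite oner_neq0 => /(_ isT p_neq0) [Bp_inv _].
    by apply: not_Bp_inv; rewrite -div1r.
  move=> g [g_pos g_neq0]; rewrite -(valK g); apply/value_leE; rewrite ?value_group_neq0 //.
  apply: p_max; move: g_pos; rewrite value0 -{1}(valK g) => /value_leE.
  rewrite oner_neq0 value_group_neq0 divr1 => /(_ isT isT) Bg; split => //; right => Bg_inv.
  apply: g_neq0; rewrite value0 -(valK g); apply: value_eq; rewrite ?oner_neq0 ?value_group_neq0 //.
  by split; rewrite ?div1r ?divr1.
- move=> x /val_ring_valuation /residue [n [Bxn hxn]]; exists n; split.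
    by move/val_ring_valuation: Bxn.
  rewrite /ring_valuation; case: eqP => // /eqP xn_neq0 [].
  move=> /class_rep_inj; rewrite nz1E ?oner_neq0 // nz1E // => -[Bxn_inv _].
  by rewrite div1r in Bxn_inv; case: hxn => // /eqP; rewrite (negbTE xn_neq0).
Qed.

End ValueGroup.

(** * The valuation ring of a p-valuation *)

Section PValuation.
Variables (G : zmodType) (le : G -> G -> Prop) (F : fieldType) (p : nat)
  (v : F -> option G).
Hypothesis hv : is_p_valuation le p v.

Let hval : is_valuation le v. Proof. by case: hv. Qed.
Let hord : ordered_abelian_group le. Proof. by case: hval. Qed.
Let le_refl a : le a a. Proof. by case: hord => h *; apply: h. Qed.
Let le_anti a b : le a b -> le b a -> a = b. Proof. by case: hord => _ h *; apply: h. Qed.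
Let le_total a b : le a b \/ le b a. Proof. by case: hord => _ _ _ h _; apply: h. Qed.
Let le_trans a b c : le a b -> le b c -> le a c.
Proof. by move=> h1 h2; case: hord => _ _ h _ _; exact: h h1 h2. Qed.
Let leD2r a b c : le a b -> le (a + c) (b + c). Proof. by case: hord => _ _ _ _ h; apply: h. Qed.
Let v_eqNone x : v x = None <-> x = 0. Proof. by case: hval => _ h. Qed.
Let vM x y : v (x * y) = vadd (v x) (v y). Proof. by case: hval => _ _ h. Qed.
Let vD x y : vle le (v x) (v (x + y)) \/ vle le (v y) (v (x + y)).
Proof. by case: hval => _ _ _ h. Qed.

Let le_subr a b : le a b -> le 0 (b - a).
Proof. by move=> /(leD2r (- a)); rewrite subrr. Qed.

Let vSome x : x != 0 -> exists a, v x = Some a.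
Proof.
move=> x_neq0; case e: (v x) => [a|]; first by exists a.
by move/v_eqNone: e x_neq0 => ->; rewrite eqxx.
Qed.

Let v1 : v 1 = Some 0.
Proof.
have [a va] := vSome (oner_neq0 F).
have := vM 1 1; rewrite mulr1 va /= => -[] /esym e.
by congr Some; apply: (addrI a); rewrite e addr0.
Qed.

Let vV x a : v x = Some a -> v x^-1 = Some (- a).
Proof.
move=> va; have x_neq0 : x != 0 by apply/eqP => /v_eqNone; rewrite va.
have [b vb] := vSome (invr_neq0 x_neq0).
have := vM x x^-1; rewrite divff // v1 va vb /= => -[] e.
by congr Some; apply: (addrI a); rewrite -e subrr.
Qed.

Let vN1 : v (-1) = Some 0.
Proof.
have [c vc] : exists c, v (-1) = Some c by apply: vSome; rewrite oppr_eq0 oner_eq0.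
have := vM (-1) (-1); rewrite mulrNN mulr1 v1 vc /= => -[] e.
congr Some; have [c_ge0|c_le0] := le_total 0 c; apply: le_anti => //.
  by have := leD2r c c_ge0; rewrite add0r -e.
by have := leD2r c c_le0; rewrite add0r -e.
Qed.

Let vN x : v (- x) = v x.
Proof. by rewrite -mulN1r vM vN1 /=; case: (v x) => //= a; rewrite add0r. Qed.

Let vle_trans o1 o2 o3 : vle le o1 o2 -> vle le o2 o3 -> vle le o1 o3.
Proof. by case: o3 => [c|]; [case: o2 => [b|] //; case: o1 => [a|] //=; exact: le_trans | case: o1]. Qed.

Local Notation R := (val_ring le v).

Lemma val_ring_valuation_ring : valuation_ring R.
Proof.
split.
- by rewrite /R /val_ring v1 /=.
- move=> x y Rx Ry; rewrite /R /val_ring.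
  have Ry' : vle le (Some 0) (v (- y)) by rewrite vN.
  by case: (vD x (- y)) => h; [apply: vle_trans Rx h | apply: vle_trans Ry' h].
- move=> x y; rewrite /R /val_ring vM.
  case: (v x) => [a|] //; case: (v y) => [b|] //= a_ge0 b_ge0.
  by apply: le_trans b_ge0 _; have := leD2r b a_ge0; rewrite add0r.
- move=> x x_neq0; have [a va] := vSome x_neq0; rewrite /R /val_ring (vV va) va /=.
  have [a_ge0|a_le0] := le_total 0 a; [by left | right].
  by have := le_subr a_le0; rewrite sub0r.
Qed.

Lemma val_ring_p_valuation_ring : p_valuation_ring R p.
Proof.
case: hv => _ [g0 vp [[g0_ge0 g0_neq0] g0_min]] residue.
split => //.
- exact: val_ring_valuation_ring.
- by rewrite /R /val_ring vp.
- rewrite /R /val_ring (vV vp) /= => h; apply: g0_neq0.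
  by apply: le_anti => //; have := leD2r g0 h; rewrite add0r addNr.
- move=> z [Rz z_max]; have [->|z_neq0] := eqVneq z 0.
    by rewrite mul0r /R /val_ring (proj2 (v_eqNone 0)).
  have [a va] := vSome z_neq0.
  rewrite /R /val_ring vM va (vV vp) /=.
  have a_pos : glt le 0 a.
    split; first by move: Rz; rewrite /R /val_ring va.
    move=> a0; case: z_max => [z0|]; first by rewrite z0 eqxx in z_neq0.
    by apply; rewrite /R /val_ring (vV va) -a0 oppr0 /=.
  exact: le_subr (g0_min _ a_pos).
- move=> x /residue [n [Rxn xn_pos]]; exists n; split => //.
  have [xn0|xn_neq0] := eqVneq (x - n%:~R) 0; first by left.
  right=> Rxn_inv; apply: xn_pos.
  have [a va] := vSome xn_neq0; rewrite va; congr Some.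
  move: Rxn Rxn_inv; rewrite /R /val_ring (vV va) va /= => a_ge0 Na_ge0.
  by apply: le_anti => //; have := leD2r a Na_ge0; rewrite addNr add0r.
Qed.

End PValuation.

Lemma is_p_val_ring_p_valuation_ring (F : fieldType) (B : F -> Prop) p :
  is_p_val_ring p B -> p_valuation_ring B p.
Proof.
move=> [G [le [v [hv BE]]]].
have -> : B = val_ring le v.
  by apply: functional_extensionality => x; apply: propositional_extensionality.
exact: val_ring_p_valuation_ring hv.
Qed.

(** * Kochen's criterion *)

Definition kochen_integral (F : fieldType) (B : F -> Prop) (p : nat) (x : F) : Prop :=
  let y := x ^+ p - x in y ^+ 2 - 1 != 0 /\ B (y / (p%:R * (y ^+ 2 - 1))).

Section PValuationRingKochen.
Variables (F : fieldType) (B : F -> Prop) (p : nat).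
Hypotheses (p_pr : prime p) (hpv : p_valuation_ring B p).

Let hB : valuation_ring B. Proof. by case: hpv. Qed.
Let not_Bp_inv : ~ B (p%:R)^-1. Proof. by case: hpv. Qed.
Let maxideal_divp z : maxideal B z -> B (z / p%:R). Proof. by case: hpv => _ _ _ h _; apply: h. Qed.
Let residue x : B x -> exists n : int, maxideal B (x - n%:~R). Proof. by case: hpv => _ _ _ _ h; apply: h. Qed.

Let p_neq0 : (p%:R : F) != 0.
Proof. by apply/eqP => p0; apply: not_Bp_inv; rewrite p0 invr0; apply: (vr0 hB). Qed.

Let maxideal_p : maxideal B p%:R.
Proof. by split; [case: hpv | right]. Qed.

(* Fermat: x^p - x is congruent mod p to n^p - n, a multiple of p, where n is
   an integer congruent to x. *)
Lemma maxideal_frobB x : B x -> maxideal B (x ^+ p - x).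
Proof.
move=> Bx; have [n xn_max] := residue Bx.
have [k nk] : exists k : int, n ^+ p - n = k * p.
  by exists ((n ^+ p - n) %/ p)%Z; rewrite divzK // fermat_int.
have -> : x ^+ p - x = (x - n%:~R) * \sum_(i < p) x ^+ (p.-1 - i) * (n%:~R) ^+ i
    - (x - n%:~R) + (k%:~R * p%:R).
  have e : ((n ^+ p - n)%:~R : F) = k%:~R * p%:R by rewrite nk intrM.
  rewrite rmorphB rmorphXn /= in e.
  by rewrite -e -subrXX; ring.
apply: (maxidealD hB); last by apply: (maxidealMl hB) => //; apply: (vr_int hB).
apply: (maxidealB hB) => //; rewrite mulrC; apply: (maxidealMl hB) => //.
by apply: (vr_sum hB) => i _; apply: (vrM hB); apply: (vrX hB) => //; apply: (vr_int hB).
Qed.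

Lemma kochen_integral_vr x : B x -> kochen_integral B p x.
Proof.
move=> Bx; rewrite /kochen_integral /=; set y := x ^+ p - x.
have y_max : maxideal B y := maxideal_frobB Bx.
have [B1yy not_max] := vr_unit1B hB (maxidealMl hB (proj1 y_max) y_max).
have [yy_neq0 B1yy_inv] := vr_unitP hB B1yy not_max.
have -> : y ^+ 2 - 1 = - (1 - y * y) by rewrite expr2 opprB.
rewrite oppr_eq0; split => //.
have -> : y / (p%:R * - (1 - y * y)) = (y / p%:R) * - (1 - y * y)^-1.
  by field; rewrite oppr_eq0 yy_neq0 p_neq0.
by apply: (vrM hB); [apply: maxideal_divp | apply: (vrN hB)].
Qed.

(* With w = 1/x and u = w^(p-1), both in the maximal ideal, one has
   y = (1 - u)/(u w), so the Kochen quotient is (w/p) u (1 - u) / t with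
   t = (1 - u)^2 - u^2 w^2 a unit of B. *)
Lemma kochen_integral_not_vr x : ~ B x -> kochen_integral B p x.
Proof.
move=> not_Bx; rewrite /kochen_integral /=; set y := x ^+ p - x.
have x_neq0 : x != 0 by apply: contra_notN not_Bx => /eqP ->; apply: (vr0 hB).
pose w := x^-1.
have w_neq0 : w != 0 by rewrite invr_eq0.
have w_max : maxideal B w.
  by split; [case: (vr_or_inv hB x_neq0) | right; rewrite /w invrK].
have [q p_eq] : exists q, p = q.+2 by exists p.-2; have := prime_gt1 p_pr; lia.
pose u := w ^+ q.+1.
have u_max : maxideal B u.
  by rewrite /u exprSr; apply: (maxidealMl hB) => //; apply: (vrX hB); case: w_max.
have u_neq0 : u != 0 by rewrite expf_neq0.
have ey : y = (u * w)^-1 - w^-1 by rewrite /y /u /w p_eq -exprSr exprVn !invrK.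
pose t := (1 - u) ^+ 2 - u ^+ 2 * w ^+ 2.
have t_unit : B t /\ ~ maxideal B t.
  have -> : t = 1 - (2%:R - u + u * w ^+ 2) * u by rewrite /t; ring.
  apply: (vr_unit1B hB); apply: (maxidealMl hB) => //; case: u_max w_max => Bu _ [Bw _].
  apply: (vrD hB); first by apply: (vrB hB) => //; apply: (vr_nat hB).
  by apply: (vrM hB) => //; apply: (vrX hB).
have [t_neq0 Bt_inv] := vr_unitP hB t_unit.1 t_unit.2.
have ey2 : y ^+ 2 - 1 = t / (u * w) ^+ 2 by rewrite ey /t; field; rewrite u_neq0 w_neq0.
split; first by rewrite ey2 mulf_neq0 // invr_eq0 expf_neq0 // mulf_neq0.
have -> : y / (p%:R * (y ^+ 2 - 1)) = (1 - u) * u * (w / p%:R) * t^-1.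
  by rewrite ey2 ey; field; rewrite u_neq0 w_neq0 p_neq0 t_neq0.
apply: (vrM hB) => //; apply: (vrM hB); last exact: maxideal_divp.
by case: u_max => Bu _; apply: (vrM hB) => //; apply: (vrB hB) => //; apply: (vr1 hB).
Qed.

Lemma p_valuation_ring_kochen x : kochen_integral B p x.
Proof.
by have [/kochen_integral_vr|/kochen_integral_not_vr] := classic (B x).
Qed.

End PValuationRingKochen.

Section KochenPValuationRing.
Variables (F : fieldType) (B : F -> Prop) (p : nat).
Hypotheses (p_pr : prime p) (hB : valuation_ring B).
Hypotheses (Bp : B p%:R) (not_Bp_inv : ~ B (p%:R)^-1).
Hypothesis kochen : forall x, kochen_integral B p x.

Let p_neq0 : (p%:R : F) != 0.
Proof. by apply/eqP => p0; apply: not_Bp_inv; rewrite p0 invr0; apply: (vr0 hB). Qed.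

Let maxideal_p : maxideal B p%:R.
Proof. by split => //; right. Qed.

Lemma kochen_frobB_divp x : B x -> B ((x ^+ p - x) / p%:R).
Proof.
move=> Bx; have [y2_neq0 By] := kochen x; set y := x ^+ p - x in y2_neq0 By *.
have -> : y / p%:R = (y / (p%:R * (y ^+ 2 - 1))) * (y ^+ 2 - 1).
  by field; rewrite y2_neq0 p_neq0.
apply: (vrM hB) => //; apply: (vrB hB); last exact: (vr1 hB).
by apply: (vrX hB); apply: (vrB hB) => //; apply: (vrX hB).
Qed.

Lemma kochen_maxideal_divp z : maxideal B z -> B (z / p%:R).
Proof.
move=> z_max; have [Bz _] := z_max.
have [q p_eq] : exists q, p = q.+2 by exists p.-2; have := prime_gt1 p_pr; lia.
have zq_max : maxideal B (z ^+ q.+1).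
  by rewrite exprSr; apply: (maxidealMl hB) => //; apply: (vrX hB).
have [Bu not_max] := vr_unit1B hB zq_max.
have [u_neq0 Bu_inv] := vr_unitP hB Bu not_max.
have -> : z / p%:R = - ((z ^+ p - z) / p%:R) * (1 - z ^+ q.+1)^-1.
  have -> : z ^+ p = z * z ^+ q.+1 by rewrite p_eq exprS.
  by field; rewrite p_neq0 u_neq0.
by apply: (vrM hB) => //; apply: (vrN hB); apply: kochen_frobB_divp.
Qed.

(* x^p - x is congruent to prod_(i < p) (x - i) modulo p B, and lies in p B,
   so the product lies in the maximal ideal and hence so does a factor. *)
Lemma kochen_residue x : B x -> exists n : int, maxideal B (x - n%:~R).
Proof.
move=> Bx; have [Q eQ] := fermat_poly_eval x p_pr.
have BQ : B (map_poly ( *~%R (1 : F)) Q).[x].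
  rewrite horner_coef; apply: (vr_sum hB) => i _; apply: (vrM hB).
    by rewrite coef_map /=; apply: (vr_int hB).
  exact: (vrX hB).
have prod_max : maxideal B (\prod_(i < p) (x - (i : nat)%:R)).
  have -> : \prod_(i < p) (x - (i : nat)%:R) =
      ((x ^+ p - x) / p%:R - (map_poly ( *~%R (1 : F)) Q).[x]) * p%:R.
    by rewrite mulrBl -eQ divfK //; ring.
  apply: (maxidealMl hB) => //; apply: (vrB hB) => //; exact: kochen_frobB_divp.
have [i hi] := maxideal_prod hB (fun i : 'I_p => vrB hB Bx (vr_nat hB i)) prod_max.
by exists (i : nat).
Qed.

Lemma kochen_p_valuation_ring : p_valuation_ring B p.
Proof.
split => //; [exact: kochen_maxideal_divp | exact: kochen_residue].
Qed.

End KochenPValuationRing.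

(** * Divisibilities *)

Section RingToDivisibility.
Variables (A : idomainType) (B : {fraction A} -> Prop).
Hypothesis hB : valuation_ring B.

Lemma div_of_ring_divisibility : is_divisibility (div_of_ring B).
Proof.
have tofrac_neq0 (a : A) : a <> 0 -> a%:F != 0 by move/eqP; rewrite tofrac_eq0.
split.
- move=> a; have [->|a_neq0] := eqVneq a 0; first by left.
  by right; split; [apply/eqP | rewrite divff ?tofrac_eq0 //; apply: (vr1 hB)].
- move=> a b c [[a0 b0]|[a_neq0 Bba]] [[b0' c0]|[b_neq0 Bcb]].
  + by left.
  + by rewrite b0 in b_neq0.
  + by right; rewrite c0 tofrac0 mul0r; split => //; apply: (vr0 hB).
  + by right; split; rewrite // (div_through _ _ (tofrac_neq0 _ b_neq0)); apply: (vrM hB).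
- move=> a b c [[a0 b0]|[a_neq0 Bba]] [[_ c0]|[_ Bca]] //.
    by left; rewrite b0 c0 subrr.
  by right; split => //; rewrite tofracB mulrBl; apply: (vrB hB).
- move=> a b c [[a0 b0]|[a_neq0 Bba]]; first by left; rewrite a0 b0 !mul0r.
  have [c0|c_neq0] := eqVneq c 0; first by left; rewrite c0 !mulr0.
  right; split; first by apply/eqP; rewrite mulf_neq0 //; apply/eqP.
  by rewrite tofrac_divMr //; apply/eqP.
- by case=> -[] // _ /eqP; rewrite oner_eq0.
Qed.

Lemma div_of_ring_total : div_total (div_of_ring B).
Proof.
move=> a b; have [->|a_neq0] := eqVneq a 0.
  have [->|b_neq0] := eqVneq b 0; first by left; left.
  by right; right; split; [apply/eqP | rewrite tofrac0 mul0r; apply: (vr0 hB)].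
have [->|b_neq0] := eqVneq b 0.
  by left; right; split; [apply/eqP | rewrite tofrac0 mul0r; apply: (vr0 hB)].
have ba_neq0 : b%:F / a%:F != 0 by rewrite mulf_neq0 ?invr_eq0 ?tofrac_eq0.
case/(vr_or_inv hB): ba_neq0 => h; [left | right]; right; split => //; try exact/eqP.
by rewrite invf_div in h.
Qed.

Lemma div_of_ring_cancellation : div_cancellation (div_of_ring B).
Proof.
move=> a b c not_div0c.
have c_neq0 : c != 0 by apply/eqP => c0; apply: not_div0c; left; rewrite c0.
case=> [[/eqP ac0 /eqP bc0]|[ac_neq0 Bbcac]].
  by left; move: ac0 bc0; rewrite !mulf_eq0 (negbTE c_neq0) !orbF => /eqP -> /eqP.
have a_neq0 : a != 0 by apply/eqP => a0; apply: ac_neq0; rewrite a0 mul0r.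
by right; split; [apply/eqP | rewrite tofrac_divMr in Bbcac].
Qed.

Lemma div_of_ring_support : support_is_zero (div_of_ring B).
Proof. by move=> a; split => [[[] // | [/eqP]]|->]; [rewrite eqxx | left]. Qed.

Lemma ring_of_div_of_ring x : ring_of_div (div_of_ring B) x <-> B x.
Proof.
split.
  case=> [[a [b [_ [[a0 _]|[_ Bba]] ->]]]|->] //; exact: (vr0 hB).
move=> Bx; have [b [a [a_neq0 ex]]] := fraction_repr x.
by left; exists a, b; split; [apply/eqP | right; split; [apply/eqP | rewrite -ex] |].
Qed.

End RingToDivisibility.

Section DivisibilityToRing.
Variables (A : idomainType) (dv : A -> A -> Prop).
Hypotheses (hd : is_divisibility dv) (htot : div_total dv).
Hypotheses (hcanc : div_cancellation dv) (hsupp : support_is_zero dv).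

Let dv_refl a : dv a a. Proof. by case: hd => h *; apply: h. Qed.
Let dv_trans a b c : dv a b -> dv b c -> dv a c.
Proof. by move=> h1 h2; case: hd => _ h _ _ _; exact: h h1 h2. Qed.
Let dvB a b c : dv a b -> dv a c -> dv a (b - c).
Proof. by move=> h1 h2; case: hd => _ _ h _ _; exact: h h1 h2. Qed.
Let dvMr a b c : dv a b -> dv (a * c) (b * c).
Proof. by move=> h1; case: hd => _ _ _ h _; exact: h h1. Qed.

Let dv0 a : dv a 0. Proof. by rewrite -(subrr a); apply: dvB. Qed.

Let not_dv0 c : c != 0 -> ~ dv 0 c.
Proof. by move=> c_neq0 /hsupp c0; rewrite c0 eqxx in c_neq0. Qed.

Lemma ring_of_div_frac a b : a != 0 -> ring_of_div dv (b%:F / a%:F) <-> dv a b.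
Proof.
move=> a_neq0; split; last by move=> dvab; left; exists a, b; split => //; apply/eqP.
case=> [[a' [b' [/eqP a'_neq0 dva'b' e]]]|/eqP].
  have e' : b * a' = b' * a.
    apply/eqP; rewrite -tofrac_eq !tofracM; apply/eqP.
    by rewrite -[b%:F](divfK (_ : a%:F != 0)) ?tofrac_eq0 // e mulrAC divfK ?tofrac_eq0.
  apply: (hcanc (not_dv0 a'_neq0)).
  by rewrite e' mulrC; apply: dvMr.
by rewrite mulf_eq0 invr_eq0 !tofrac_eq0 (negbTE a_neq0) orbF => /eqP ->.
Qed.

Lemma ring_of_div_repr x :
  exists a b : A, [/\ a != 0, x = b%:F / a%:F & (ring_of_div dv x <-> dv a b)].
Proof.
have [b [a [a_neq0 ->]]] := fraction_repr x.
by exists a, b; split => //; apply: ring_of_div_frac.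
Qed.

Lemma ring_of_div_valuation_ring : valuation_ring (ring_of_div dv).
Proof.
split.
- by rewrite -(divr1 1) -tofrac1; apply/ring_of_div_frac; rewrite ?oner_neq0.
- move=> x y; have [a [b [a_neq0 -> ->]]] := ring_of_div_repr x.
  have [c [d [c_neq0 -> ->]]] := ring_of_div_repr y => dvab dvcd.
  rewrite -(tofrac_divMr b a_neq0 c_neq0) -(tofrac_divMr d c_neq0 a_neq0).
  rewrite [c * a]mulrC -mulrBl -tofracB.
  apply/ring_of_div_frac; first by rewrite mulf_neq0.
  by apply: dvB; [apply: dvMr | rewrite [a * c]mulrC; apply: dvMr].
- move=> x y; have [a [b [a_neq0 -> ->]]] := ring_of_div_repr x.
  have [c [d [c_neq0 -> ->]]] := ring_of_div_repr y => dvab dvcd.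
  rewrite mulf_div -!tofracM; apply/ring_of_div_frac; first by rewrite mulf_neq0.
  apply: dv_trans (dvMr c dvab) _.
  by rewrite [b * c]mulrC [b * d]mulrC; apply: dvMr.
- move=> x; have [a [b [a_neq0 -> _]]] := ring_of_div_repr x => ba_neq0.
  have b_neq0 : b != 0 by apply: contraNneq ba_neq0 => ->; rewrite tofrac0 mul0r.
  case: (htot a b) => h; [left | right]; first exact/ring_of_div_frac.
  by rewrite invf_div; apply/ring_of_div_frac.
Qed.

Lemma div_of_ring_of_div a b : div_of_ring (ring_of_div dv) a b <-> dv a b.
Proof.
split.
  case=> [[-> ->]|[/eqP a_neq0 /ring_of_div_frac]]; [exact/hsupp | exact].
have [->|a_neq0] := eqVneq a 0; first by move/hsupp ->; left.
by move=> dvab; right; split; [apply/eqP | apply/ring_of_div_frac].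
Qed.

End DivisibilityToRing.

Lemma kochen_clear_denom (K : fieldType) (P X Y Xp Yp : K) : Y != 0 -> Yp != 0 ->
  P * ((Xp * Y - Yp * X) * (Xp * Y - Yp * X) - Yp * Y * (Yp * Y)) =
    P * (Yp * Y) ^+ 2 * ((Xp / Yp - X / Y) ^+ 2 - 1) /\
  (Xp * Y - Yp * X) * (Yp * Y) = (Yp * Y) ^+ 2 * (Xp / Yp - X / Y).
Proof. by move=> Y_neq0 Yp_neq0; split; field; rewrite Yp_neq0 Y_neq0. Qed.

Lemma divf_cancel_mull (K : fieldType) (c x y : K) : c != 0 -> c * x / (y * c) = x / y.
Proof. by move=> c_neq0; rewrite [y * c]mulrC invfM mulrACA divff ?mul1r. Qed.

Section KochenDivisibility.
Variables (A : idomainType) (p : nat).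
Hypotheses (p_pr : prime p) (pA_neq0 : (p%:R : A) != 0).

Definition kochen_den (a b : A) : A :=
  p%:R * ((a ^+ p * b - b ^+ p * a) ^+ 2 - (b ^+ p.+1) ^+ 2).

Definition kochen_num (a b : A) : A := (a ^+ p * b - b ^+ p * a) * b ^+ p.+1.

Let pF_neq0 : (p%:R : {fraction A}) != 0.
Proof. by rewrite -(rmorph_nat (@FracField.tofrac A)) tofrac_eq0. Qed.

(* Axiom (7) is Kochen's criterion at x = a/b, multiplied through by
   b^(2(p+1)). *)
Lemma tofrac_kochen a b : b != 0 ->
  let x := a%:F / b%:F in let y := x ^+ p - x in
  (kochen_den a b)%:F = p%:R * (b%:F ^+ p.+1) ^+ 2 * (y ^+ 2 - 1) /\
  (kochen_num a b)%:F = (b%:F ^+ p.+1) ^+ 2 * y.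
Proof.
move=> b_neq0 x y; have bF_neq0 : b%:F != 0 by rewrite tofrac_eq0.
rewrite /y /x /kochen_den /kochen_num expr_div_n.
rewrite !(rmorphM, rmorphB, rmorphXn) /= rmorph_nat exprSr.
by apply: kochen_clear_denom; rewrite ?expf_neq0.
Qed.

Lemma kochen_integral_frac (B : {fraction A} -> Prop) a b : b != 0 ->
  kochen_integral B p (a%:F / b%:F) <->
  kochen_den a b != 0 /\ B ((kochen_num a b)%:F / (kochen_den a b)%:F).
Proof.
move=> b_neq0; have [] := tofrac_kochen a b_neq0; rewrite /kochen_integral.
set y := (a%:F / b%:F) ^+ p - _; set c := b%:F ^+ p.+1.
have c_neq0 : c != 0 by rewrite expf_neq0 ?tofrac_eq0.
clearbody y c => eD eN.
have pc_neq0 : p%:R * c ^+ 2 != 0 by rewrite mulf_neq0 ?expf_neq0.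
have -> : (kochen_den a b != 0) = (y ^+ 2 - 1 != 0).
  by rewrite -tofrac_eq0 eD mulf_eq0 (negbTE pc_neq0).
by rewrite eD eN (mulrAC p%:R) divf_cancel_mull ?expf_neq0.
Qed.

Lemma kochen_den_num_eq0 a b : b != 0 -> kochen_den a b = 0 -> kochen_num a b != 0.
Proof.
move=> b_neq0 den0; have [eD eN] := tofrac_kochen a b_neq0.
apply/negP; rewrite -tofrac_eq0 eN mulf_eq0 !expf_eq0 tofrac_eq0 (negbTE b_neq0) andbF /=.
move/eqP => y0; move: eD; rewrite den0 tofrac0 y0 expr0n /= sub0r mulrN1.
move=> /esym/eqP; rewrite oppr_eq0; apply/negP.
by rewrite mulf_neq0 // !expf_neq0 // tofrac_eq0.
Qed.

Lemma p_valuation_ring_good_p_div (B : {fraction A} -> Prop) :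
  p_valuation_ring B p -> good_p_div p (div_of_ring B).
Proof.
move=> hpv; have [hB Bp not_Bp_inv _ _] := hpv.
split; last exact: div_of_ring_support.
- split; first exact: div_of_ring_divisibility.
    move=> a not_div0a [[/eqP pa0 _]|[pa_neq0 B_ap]].
      by apply: not_div0a; left; split => //; move: pa0; rewrite mulf_eq0 (negbTE pA_neq0) => /eqP.
    have a_neq0 : a != 0 by apply: contra_notN not_div0a => /eqP ->; left.
    apply: not_Bp_inv; move: B_ap.
    by rewrite tofracM invfM mulrCA divff ?mulr1 ?tofrac_eq0 // rmorph_nat.
  move=> a b; have [->|b_neq0] := eqVneq b 0.
    left; rewrite /kochen_den !expr0n /= !eqn0Ngt prime_gt0 //=.
    by rewrite !(mulr0, mul0r, subrr, expr0n).
  have [den_neq0 B_ratio] := (kochen_integral_frac B a b_neq0).1 (p_valuation_ring_kochen p_pr hpv _).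
  by right; split => //; apply/eqP.
- exact: div_of_ring_total.
- exact: div_of_ring_cancellation.
Qed.

Lemma good_p_div_p_valuation_ring (dv : A -> A -> Prop) :
  good_p_div p dv -> p_valuation_ring (ring_of_div dv) p.
Proof.
case=> -[hd not_dv_pa_a kochen_dv] htot hcanc hsupp.
have hB := ring_of_div_valuation_ring hd htot hcanc hsupp.
apply: kochen_p_valuation_ring => //; first exact: vr_nat.
- rewrite -(rmorph_nat (@FracField.tofrac A)) -div1r -tofrac1.
  move/(ring_of_div_frac hd hcanc hsupp _ pA_neq0); rewrite -[p%:R]mulr1.
  by apply: not_dv_pa_a => /hsupp /eqP; rewrite oner_eq0.
- move=> x; have [a [b [b_neq0 ->]]] := fraction_repr x.
  apply/(kochen_integral_frac _ _ b_neq0).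
  have den_neq0 : kochen_den a b != 0.
    apply/eqP => den0; have : dv (kochen_den a b) (kochen_num a b) := kochen_dv a b.
    by rewrite den0 => /hsupp/eqP; apply/negP; apply: kochen_den_num_eq0.
  by split => //; apply/(ring_of_div_frac hd hcanc hsupp _ den_neq0); apply: kochen_dv.
Qed.

End KochenDivisibility.

Theorem theorem2p6 (p : nat) (A : idomainType) :
  prime p ->
  (forall n : nat, (0 < n)%N -> (n%:R : A) \is a GRing.unit) ->
  [/\ (forall B : {fraction A} -> Prop,
         is_p_val_ring p B -> good_p_div p (div_of_ring B)),
      (forall dv : A -> A -> Prop,
         good_p_div p dv -> is_p_val_ring p (ring_of_div dv)),
      (forall B : {fraction A} -> Prop,
         is_p_val_ring p B ->
         forall x, ring_of_div (div_of_ring B) x <-> B x)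
    & (forall dv : A -> A -> Prop,
         good_p_div p dv ->
         forall a b, div_of_ring (ring_of_div dv) a b <-> dv a b)].
Proof.
move=> p_pr nat_unit.
have pA_neq0 : (p%:R : A) != 0.
  by apply: contraTneq (nat_unit p (prime_gt0 p_pr)) => ->; rewrite unitr0.
split.
- move=> B /is_p_val_ring_p_valuation_ring.
  exact: p_valuation_ring_good_p_div.
- move=> dv /(good_p_div_p_valuation_ring p_pr pA_neq0) hpv.
  by apply: p_valuation_ring_is_p_val_ring => //; case: hpv.
- move=> B /is_p_val_ring_p_valuation_ring [hB _ _ _ _] x.
  exact: ring_of_div_of_ring.
- by move=> dv [[hd _ _] htot hcanc hsupp] a b; apply: div_of_ring_of_div.
Qed.
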